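(* Let $Q=(-\frac12,\frac12)^N$ and let $f:\mathbb{R}^N\times\mathbb{R}^d\to[0,+\infty)$ be measurable and $Q$-periodic in the first variable, satisfying $C_1|\zeta|\le f(x,\zeta)\le C_2(1+|\zeta|)$, and Lipschitz continuous in the second variable with Lipschitz constant $L>0$, i.e. $|f(x,\zeta_1)-f(x,\zeta_2)|\le L|\zeta_1-\zeta_2|$ for all $x,\zeta_1,\zeta_2$. Let $\mathcal{A}=\sum_{i=1}^NA^{(i)}\partial_{x_i}$ with $A^{(i)}\in\mathbb{R}^{M\times d}$. Define, for $b\in\mathbb{R}^d$, $$f_{\mathcal{A}\text{-hom}}(b):=\inf_{R\in\mathbb{N}}\inf\Big\{\frac{1}{|RQ|}\int_{RQ}f(x,b+w(x))\,dx:\ w\in L^1_{RQ\text{-per}}(\mathbb{R}^N;\mathbb{R}^d),\ \mathcal{A}w=0,\ \frac{1}{|RQ|}\int_{RQ}w=0\Big\}.$$ Then $f_{\mathcal{A}\text{-hom}}:\mathbb{R}^d\to\mathbb{R}$ is Lipschitz continuous with Lipschitz constant $L$.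
   Context: $L^1_{RQ\text{-per}}(\mathbb{R}^N;\mathbb{R}^d)$ denotes functions integrable on $RQ$ extended $RQ$-periodically to $\mathbb{R}^N$; $\mathcal{A}w=0$ is meant in the sense of distributions on $\mathbb{R}^N$. *)

From HB Require Import structures.
From mathcomp Require Import all_boot all_order all_algebra.
From mathcomp Require Import all_classical all_reals all_analysis.
Set Implicit Arguments.
Unset Strict Implicit.
Unset Printing Implicit Defensive.
Import Order.TTheory GRing.Theory Num.Theory.
Import numFieldNormedType.Exports.
Local Open Scope classical_set_scope.
Local Open Scope ring_scope.

(* Points of R^n are represented by n.-tuple R, which MathComp-Analysis
   equips with the product (= Borel) sigma-algebra generated by the
   coordinate projections. *)

Section Defs.
Variable R : realType.

Definition tadd n (x y : n.-tuple R) : n.-tuple R :=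
  [tuple tnth x j + tnth y j | j < n].
Definition tsub n (x y : n.-tuple R) : n.-tuple R :=
  [tuple tnth x j - tnth y j | j < n].
Definition enorm n (z : n.-tuple R) : R :=
  Num.sqrt (\sum_(j < n) tnth z j ^+ 2).
Definition tshift n (x : n.-tuple R) (i : 'I_n) (c : R) : n.-tuple R :=
  [tuple tnth x j + (if j == i then c else 0) | j < n].
Definition tupd n (x : n.-tuple R) (i : 'I_n) (t : R) : n.-tuple R :=
  [tuple if j == i then t else tnth x j | j < n].

(* Iterated product of the one-dimensional Lebesgue measure:
   lebN 0 is the Dirac mass at the empty tuple, and
   lebN (n+1) A = \int_R lebN n {t | x :: t \in A} dx
   (the product measure lebesgue \x lebN n, transported along cons). *)
Fixpoint lebN (n : nat) : set (n.-tuple R) -> \bar R :=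
  match n return set (n.-tuple R) -> \bar R with
  | 0 => fun A => (\1_A [tuple] : R)%:E
  | n'.+1 => fun A =>
      (\int[@lebesgue_measure R]_x @lebN n' [set t | A (cons_tuple (x : R) t)])%E
  end.
Arguments lebN n _ : clear implicits.

Definition cube n (r : R) : set (n.-tuple R) :=
  [set x | forall i : 'I_n, - (r / 2) < tnth x i < r / 2].
Arguments cube n r : clear implicits.

Definition partial n (i : 'I_n) (phi : n.-tuple R -> R) : n.-tuple R -> R :=
  fun x => derive1 (fun t => phi (tupd x i t)) (tnth x i).
Fixpoint iter_partial n (s : seq 'I_n) (phi : n.-tuple R -> R) :=
  match s with
  | [::] => phi
  | i :: s' => partial i (iter_partial s' phi)
  end.
Definition tcontinuous n (g : n.-tuple R -> R) : Prop :=
  forall x (e : R), 0 < e -> exists2 del : R, 0 < del &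
    forall y, (forall i, `|tnth y i - tnth x i| < del) -> `|g y - g x| < e.
Definition smooth n (phi : n.-tuple R -> R) : Prop :=
  forall s : seq 'I_n, tcontinuous (iter_partial s phi) /\
    forall (i : 'I_n) x,
      derivable (fun t => iter_partial s phi (tupd x i t)) (tnth x i) 1.
Definition compact_support n (phi : n.-tuple R -> R) : Prop :=
  exists r : R, forall x, (exists i, r < `|tnth x i|) -> phi x = 0.
Definition test_fun n (phi : n.-tuple R -> R) : Prop :=
  smooth phi /\ compact_support phi.

(* A w = 0 in the sense of distributions on R^N: for every test function
   phi in C_c^oo(R^N; R^M),
   <A w, phi> = - \int sum_(k,i,j) A^(i)_(k j) w_j d_i phi_k = 0. *)
Definition A_free N d M (A : 'I_N -> 'M[R]_(M, d))
    (w : N.-tuple R -> d.-tuple R) : Prop :=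
  forall phi : 'I_M -> N.-tuple R -> R, (forall k, test_fun (phi k)) ->
    (\int[lebN N]_x
       (\sum_(k < M) \sum_(i < N) \sum_(j < d)
          A i k j * tnth (w x) j * partial i (phi k) x)%:E = 0)%E.

Definition admissible N d M (A : 'I_N -> 'M[R]_(M, d)) (r : nat)
    (w : N.-tuple R -> d.-tuple R) : Prop :=
  [/\ forall j : 'I_d, measurable_fun setT (fun x => tnth (w x) j),
      forall j : 'I_d,
        (\int[lebN N]_(x in cube N r%:R) (`|tnth (w x) j|)%:E < +oo)%E,
      forall x (i : 'I_N), w (tshift x i r%:R) = w x,
      A_free A w &
      forall j : 'I_d, (\int[lebN N]_(x in cube N r%:R) (tnth (w x) j)%:E = 0)%E].

Definition f_A_hom N d M (A : 'I_N -> 'M[R]_(M, d))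
    (f : N.-tuple R -> d.-tuple R -> R) (b : d.-tuple R) : \bar R :=
  ereal_inf [set v | exists (r : nat) (w : N.-tuple R -> d.-tuple R),
    [/\ (0 < r)%N, admissible A r w &
        v = (((r%:R ^+ N)^-1)%:E *
             \int[lebN N]_(x in cube N r%:R) (f x (tadd b (w x)))%:E)%E]].

End Defs.

From HB Require Import structures.
From mathcomp Require Import all_boot all_order all_algebra.
From mathcomp Require Import all_classical all_reals all_analysis.
From mathcomp Require Import measurable_realfun lra.
Set Implicit Arguments.
Unset Strict Implicit.
Unset Printing Implicit Defensive.
Import Order.TTheory GRing.Theory Num.Theory.
Import numFieldNormedType.Exports.
Local Open Scope classical_set_scope.
Local Open Scope ring_scope.

(* For a fixed admissible pair (R, w), replacing b2 by b1 moves the integrand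
   pointwise by at most L |b1 - b2|, hence moves the cell average by at most
   L |b1 - b2|.  Both infima range over the same admissible pairs, so
   f_hom(b1) <= f_hom(b2) + L |b1 - b2|, and symmetrically.  Finiteness follows
   from f >= 0 and the competitor w = 0, R = 1. *)

Section ConsProductMeasure.
Context (R : realType) (n : nat)
  (mu : {sigma_finite_measure set (n.-tuple R) -> \bar R}).

Definition tuple_cons (p : R * n.-tuple R) : n.+1.-tuple R :=
  cons_tuple p.1 p.2.
Definition tuple_uncons (t : n.+1.-tuple R) : R * n.-tuple R :=
  (thead t, [tuple of behead t]).

Lemma measurable_tuple_cons : measurable_fun setT tuple_cons.
Proof. exact: (measurable_cons measurable_fst measurable_snd). Qed.

Lemma measurable_tuple_uncons : measurable_fun setT tuple_uncons.
Proof.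
apply: measurable_fun_pair; last exact: measurable_behead.
exact: measurable_tnth.
Qed.

Lemma tuple_unconsK : cancel tuple_uncons tuple_cons.
Proof. by move=> [[|x s] Hs] //; apply: val_inj. Qed.

Lemma tuple_consK : cancel tuple_cons tuple_uncons.
Proof. by case=> x t; congr pair; apply: val_inj. Qed.

Lemma measurable_tuple_cons_preimage (A : set (n.+1.-tuple R)) :
  measurable A -> measurable (tuple_cons @^-1` A).
Proof.
by move=> mA; rewrite -[X in measurable X]setTI; exact: measurable_tuple_cons.
Qed.

Lemma measurable_tuple_uncons_preimage (B : set (R * n.-tuple R)) :
  measurable B -> measurable (tuple_uncons @^-1` B).
Proof.
by move=> mB; rewrite -[X in measurable X]setTI; exact: measurable_tuple_uncons.
Qed.

Definition cons_product_measure (A : set (n.+1.-tuple R)) : \bar R :=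
  ((@lebesgue_measure R) \x mu)%E (tuple_cons @^-1` A).

Let cons_product_measure0 : cons_product_measure set0 = 0%E.
Proof. by rewrite /cons_product_measure preimage_set0 measure0. Qed.

Let cons_product_measure_ge0 A : (0 <= cons_product_measure A)%E.
Proof. exact: measure_ge0. Qed.

Let cons_product_measure_sigma_additive :
  semi_sigma_additive cons_product_measure.
Proof.
move=> F mF tF mUF; rewrite /cons_product_measure preimage_bigcup.
apply: measure_semi_sigma_additive.
- by move=> k; exact: measurable_tuple_cons_preimage.
- apply/trivIsetP => /= i j _ _ ij; rewrite -preimage_setI.
  by move/trivIsetP : tF => /(_ _ _ _ _ ij) ->//; rewrite preimage_set0.
- by rewrite -preimage_bigcup; exact: measurable_tuple_cons_preimage.
Qed.

HB.instance Definition _ := isMeasure.Build _ _ _ cons_product_measure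
  cons_product_measure0 cons_product_measure_ge0
  cons_product_measure_sigma_additive.

Lemma cons_product_measureX (I : set R) (B : set (n.-tuple R)) :
  measurable I -> measurable B ->
  cons_product_measure (tuple_uncons @^-1` (I `*` B)) =
  (lebesgue_measure I * mu B)%E.
Proof.
move=> mI mB; rewrite /cons_product_measure.
have -> : tuple_cons @^-1` (tuple_uncons @^-1` (I `*` B)) = I `*` B.
  by apply/seteqP; split => p; rewrite /preimage /mkset (tuple_consK p).
exact: product_measure1E.
Qed.

Let cons_product_measure_sigma_finite :
  sigma_finite setT cons_product_measure.
Proof.
have /sigma_finiteP[F [TF ndF Foo]] := sigma_finiteT (@lebesgue_measure R).
have /sigma_finiteP[G [TG ndG Goo]] := sigma_finiteT mu.
exists (fun k => tuple_uncons @^-1` (F k `*` G k)).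
  rewrite -preimage_bigcup; apply/seteqP; split => // t _ /=.
  have : (setT : set R) (tuple_uncons t).1 by [].
  rewrite TF => -[i _ Fi].
  have : (setT : set (n.-tuple R)) (tuple_uncons t).2 by [].
  rewrite TG => -[j _ Gj].
  exists (maxn i j) => //; split.
  - by move: Fi; exact/subsetPset/ndF/leq_maxl.
  - by move: Gj; exact/subsetPset/ndG/leq_maxr.
move=> k; have [mFk Fkoo] := Foo k; have [mGk Gkoo] := Goo k.
split; first by apply: measurable_tuple_uncons_preimage; exact: measurableX.
by rewrite cons_product_measureX// lte_mul_pinfty// ge0_fin_numE.
Qed.

HB.instance Definition _ := Measure_isSigmaFinite.Build _ _ _
  cons_product_measure cons_product_measure_sigma_finite.

End ConsProductMeasure.

Arguments tuple_cons {R n}.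
Arguments tuple_uncons {R n}.
Arguments tuple_consK {R n}.
Arguments tuple_unconsK {R n}.
Arguments cons_product_measure {R n}.

Lemma lebN_succ (R : realType) n
    (mu : {sigma_finite_measure set (n.-tuple R) -> \bar R}) :
  @lebN R n = mu -> @lebN R n.+1 = cons_product_measure mu.
Proof.
move=> lebNE; apply: funext => A /=; rewrite lebNE /cons_product_measure.
rewrite /product_measure1; apply: eq_integral => x _ /=; congr (mu _).
by apply/seteqP; split => t /=; rewrite /xsection /= inE.
Qed.

Lemma lebN_sigma_finite (R : realType) n :
  exists mu : {sigma_finite_measure set (n.-tuple R) -> \bar R}, @lebN R n = mu.
Proof.
elim: n => [|n [mu lebNE]]; first by exists (@dirac _ _ [tuple] R).
by exists (cons_product_measure mu); exact: lebN_succ.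
Qed.

Lemma cube_cons (R : realType) n (r x : R) (t : n.-tuple R) :
  @cube R n.+1 r (cons_tuple x t) <-> - (r / 2) < x < r / 2 /\ @cube R n r t.
Proof.
split => [cxt|[cx ct] i].
  split; first by have := cxt ord0; rewrite (tnth0 x t).
  by move=> j; have := cxt (lift ord0 j); rewrite (tnthS x t).
by case: (unliftP ord0 i) => [j ->|->]; rewrite ?(tnthS x t) ?(tnth0 x t).
Qed.

Lemma cube_succE (R : realType) n (r : R) :
  @cube R n.+1 r =
  tuple_uncons @^-1` (`]- (r / 2), r / 2[%classic `*` @cube R n r).
Proof.
apply/seteqP; split => t.
all: rewrite /preimage /mkset -(tuple_unconsK t) tuple_consK.
  case: (tuple_uncons t) => x s /cube_cons [rx cs].
  by split => //=; rewrite in_itv.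
by case: (tuple_uncons t) => x s [/= rx cs]; apply/cube_cons; split.
Qed.

Lemma lebN_cube (R : realType) n (r : R) : 0 < r ->
  measurable (@cube R n r) /\ @lebN R n (@cube R n r) = (r ^+ n)%:E.
Proof.
move=> r0; elim: n => [|n [mcube IH]].
  have -> : @cube R 0 r = setT by apply/seteqP; split => // x _ [].
  by rewrite /= indicE in_setT expr0.
have mI : measurable (`]- (r / 2), r / 2[%classic : set R).
  exact: measurable_itv.
rewrite cube_succE; split.
  by apply: measurable_tuple_uncons_preimage; exact: measurableX.
have [mu lebNE] := lebN_sigma_finite R n.
rewrite (lebN_succ lebNE) cons_product_measureX // -lebNE IH.
rewrite lebesgue_measure_itv /= ifT ?lte_fin ?gtrN ?divr_gt0 //.
by rewrite -EFinB -EFinM exprS opprK -splitr.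
Qed.

Lemma sigma_finite_lebN_cube (R : realType) n
    (mu : {sigma_finite_measure set (n.-tuple R) -> \bar R}) (r : nat) :
  @lebN R n = mu -> (0 < r)%N ->
  measurable (@cube R n r%:R) /\ mu (@cube R n r%:R) = (r%:R ^+ n)%:E.
Proof. by move=> <- r0; apply: lebN_cube; rewrite ltr0n. Qed.

Lemma enorm_ge0 (R : realType) n (z : n.-tuple R) : 0 <= enorm z.
Proof. exact: sqrtr_ge0. Qed.

Lemma enorm_tsubC (R : realType) n (x y : n.-tuple R) :
  enorm (tsub x y) = enorm (tsub y x).
Proof.
rewrite /enorm; congr Num.sqrt; apply: eq_bigr => j _.
by rewrite !tnth_mktuple -opprB sqrrN.
Qed.

Lemma tsub_tadd2r (R : realType) n (x y v : n.-tuple R) :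
  tsub (tadd x v) (tadd y v) = tsub x y.
Proof.
by apply: eq_from_tnth => j; rewrite !tnth_mktuple opprD addrACA subrr addr0.
Qed.

Section CellAverage.
Context (R : realType) (N d : nat) (f : N.-tuple R -> d.-tuple R -> R).
Hypothesis measurable_f :
  measurable_fun setT (fun p : N.-tuple R * d.-tuple R => f p.1 p.2).
Hypothesis f_ge0 : forall x z, 0 <= f x z.

Definition cell_average (r : nat) (b : d.-tuple R)
    (w : N.-tuple R -> d.-tuple R) : \bar R :=
  (((r%:R ^+ N)^-1)%:E *
   \int[@lebN R N]_(x in @cube R N r%:R) (f x (tadd b (w x)))%:E)%E.

Lemma measurable_shifted_integrand (b : d.-tuple R)
    (w : N.-tuple R -> d.-tuple R) :
  (forall j, measurable_fun setT (fun x => tnth (w x) j)) ->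
  measurable_fun setT (fun x => (f x (tadd b (w x)))%:E).
Proof.
move=> mw; apply/measurable_EFinP.
have mbw : measurable_fun setT (fun x => tadd b (w x)).
  apply/measurable_fun_tnthP => j.
  rewrite (_ : _ \o _ = fun x => tnth b j + tnth (w x) j); last first.
    by apply: funext => x /=; rewrite tnth_mktuple.
  exact: measurable_funD.
exact: (measurableT_comp measurable_f
  (measurable_fun_pair (@measurable_id _ _ setT) mbw)).
Qed.

Lemma cell_average_ge0 r b w : (0 <= cell_average r b w)%E.
Proof.
have [mu lebNE] := lebN_sigma_finite R N; rewrite /cell_average lebNE.
apply: mule_ge0; first by rewrite lee_fin invr_ge0 exprn_ge0.
by apply: integral_ge0 => x _; rewrite lee_fin.
Qed.

Lemma cell_average_le_const r b w (K : R) : (0 < r)%N ->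
  (forall j, measurable_fun setT (fun x => tnth (w x) j)) ->
  (forall x, f x (tadd b (w x)) <= K) -> (cell_average r b w <= K%:E)%E.
Proof.
move=> r0 mw fK; have [mu lebNE] := lebN_sigma_finite R N.
have [mcube cubeE] := sigma_finite_lebN_cube lebNE r0.
rewrite /cell_average lebNE.
have rN0 : r%:R ^+ N != 0 :> R by rewrite expf_neq0 // pnatr_eq0 -lt0n.
have rinv0 : (0 <= ((r%:R ^+ N)^-1)%:E :> \bar R)%E.
  by rewrite lee_fin invr_ge0 exprn_ge0.
have : (\int[mu]_(x in @cube R N r%:R) (f x (tadd b (w x)))%:E <=
        \int[mu]_(x in @cube R N r%:R) K%:E)%E.
  apply: ge0_le_integral => //.
  - by move=> x _; rewrite lee_fin.
  - exact: measurable_funS (measurable_shifted_integrand b mw).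
  - by move=> x _; rewrite lee_fin fK.
rewrite integral_cst //; set m := (X in (K%:E * X)%E).
rewrite (_ : m = (r%:R ^+ N)%:E); last exact: cubeE.
move=> /(lee_wpmul2l rinv0) /le_trans; apply.
by rewrite -!EFinM mulrCA mulVf ?mulr1.
Qed.

Lemma cell_average_le_add r b1 b2 w (c : R) : (0 < r)%N -> 0 <= c ->
  (forall j, measurable_fun setT (fun x => tnth (w x) j)) ->
  (forall x, f x (tadd b1 (w x)) <= f x (tadd b2 (w x)) + c) ->
  (cell_average r b1 w <= cell_average r b2 w + c%:E)%E.
Proof.
move=> r0 c0 mw f12; have [mu lebNE] := lebN_sigma_finite R N.
have [mcube cubeE] := sigma_finite_lebN_cube lebNE r0.
rewrite /cell_average lebNE.
have rN0 : r%:R ^+ N != 0 :> R by rewrite expf_neq0 // pnatr_eq0 -lt0n.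
have rinv0 : (0 <= ((r%:R ^+ N)^-1)%:E :> \bar R)%E.
  by rewrite lee_fin invr_ge0 exprn_ge0.
have mf b : measurable_fun (@cube R N r%:R) (fun x => (f x (tadd b (w x)))%:E).
  exact: measurable_funS (measurable_shifted_integrand b mw).
have mf1 := mf b1; have mf2 := mf b2.
have : (\int[mu]_(x in @cube R N r%:R) (f x (tadd b1 (w x)))%:E <=
        \int[mu]_(x in @cube R N r%:R) ((f x (tadd b2 (w x)))%:E + c%:E))%E.
  apply: ge0_le_integral => //.
  - by move=> x _; rewrite lee_fin.
  - by apply: emeasurable_funD => //; exact: measurable_cst.
  - by move=> x _; rewrite -EFinD lee_fin f12.
rewrite ge0_integralD //; last by move=> x _; rewrite lee_fin.
rewrite integral_cst //; set m := (X in (c%:E * X)%E).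
rewrite (_ : m = (r%:R ^+ N)%:E); last exact: cubeE.
move=> /(lee_wpmul2l rinv0) /le_trans; apply.
rewrite ge0_muleDr //.
- by rewrite -!EFinM mulrCA mulVf ?mulr1.
- by apply: integral_ge0 => x _; rewrite lee_fin.
- by rewrite lee_fin mulr_ge0 ?exprn_ge0.
Qed.

Lemma cell_average_lipschitz (L : R) r b1 b2 w : (0 < r)%N -> 0 <= L ->
  (forall x z1 z2, `|f x z1 - f x z2| <= L * enorm (tsub z1 z2)) ->
  (forall j, measurable_fun setT (fun x => tnth (w x) j)) ->
  (cell_average r b1 w <= cell_average r b2 w + (L * enorm (tsub b1 b2))%:E)%E.
Proof.
move=> r0 L0 f_lip mw.
apply: cell_average_le_add => // [|x]; first by rewrite mulr_ge0 ?enorm_ge0.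
rewrite -lerBlDl; apply: le_trans (ler_norm _) _.
by have := f_lip x (tadd b1 (w x)) (tadd b2 (w x)); rewrite tsub_tadd2r.
Qed.

End CellAverage.

Lemma admissible0 (R : realType) N d M (A : 'I_N -> 'M[R]_(M, d)) r :
  admissible A r (fun _ => [tuple (0 : R) | _ < d]).
Proof.
have [mu lebNE] := lebN_sigma_finite R N.
have zeroE (j : 'I_d) : tnth [tuple (0 : R) | _ < d] j = 0.
  by rewrite tnth_mktuple.
split.
- move=> j; rewrite (_ : (fun x => _) = cst 0); first exact: measurable_cst.
  by apply: funext => x; rewrite zeroE.
- by move=> j; rewrite lebNE integral0_eq ?ltry // => x _; rewrite zeroE normr0.
- by [].
- move=> phi _; rewrite lebNE integral0_eq // => x _.
  rewrite big1 // => k _; rewrite big1 // => i _; rewrite big1 // => j _.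
  by rewrite zeroE mulr0 mul0r.
- by move=> j; rewrite lebNE integral0_eq // => x _; rewrite zeroE.
Qed.

Lemma ereal_inf_le_shift (R : realType) (S T : set (\bar R)) (c : R) :
  (forall v, S v -> exists2 u, T u & (u <= v + c%:E)%E) ->
  (ereal_inf T <= ereal_inf S + c%:E)%E.
Proof.
move=> ST; rewrite -leeBlDr //; apply: le_ereal_inf_tmp => v /ST[u Tu uv].
by rewrite leeBlDr //; apply: le_trans uv; exact: ereal_inf_lbound.
Qed.

Theorem proposition2p14 (R : realType) (N d M : nat)
    (A : 'I_N -> 'M[R]_(M, d)) (f : N.-tuple R -> d.-tuple R -> R)
    (C1 C2 L : R) :
  measurable_fun setT (fun p : N.-tuple R * d.-tuple R => f p.1 p.2) ->
  (forall x z, 0 <= f x z) ->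
  (forall x z (i : 'I_N), f (tshift x i 1) z = f x z) ->
  (forall x z, C1 * enorm z <= f x z /\ f x z <= C2 * (1 + enorm z)) ->
  0 < L ->
  (forall x z1 z2, `|f x z1 - f x z2| <= L * enorm (tsub z1 z2)) ->
  (forall b, f_A_hom A f b \is a fin_num) /\
  (forall b1 b2, `|fine (f_A_hom A f b1) - fine (f_A_hom A f b2)|
                   <= L * enorm (tsub b1 b2)).
Proof.
move=> mf f0 _ fbnd L0 flip.
have hom_fin b : f_A_hom A f b \is a fin_num.
  pose z0 := [tuple (0 : R) | _ < d]; pose w0 := fun _ : N.-tuple R => z0.
  have [mw0 _ _ _ _] := admissible0 A 1.
  have hom_ub : (f_A_hom A f b <= (C2 * (1 + enorm (tadd b z0)))%:E)%E.
    apply: le_trans (cell_average_le_const mf f0 (b := b) _ mw0 _).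
    - apply: ereal_inf_lbound; exists 1%N, w0.
      by split => //; exact: admissible0.
    - by [].
    - by move=> x; case: (fbnd x (tadd b (w0 x))).
  rewrite ge0_fin_numE ?(le_lt_trans hom_ub (ltry _)) //.
  by apply: le_ereal_inf_tmp => _ [r [w [_ _ ->]]]; exact: cell_average_ge0.
have hom_le b1 b2 :
    (f_A_hom A f b1 <= f_A_hom A f b2 + (L * enorm (tsub b1 b2))%:E)%E.
  apply: ereal_inf_le_shift => _ [r [w [r0 adm ->]]].
  exists (cell_average f r b1 w); first by exists r, w.
  have [mw _ _ _ _] := adm.
  exact: (cell_average_lipschitz mf f0 b1 b2 r0 (ltW L0) flip mw).
split => // b1 b2; rewrite ler_distl.
have := hom_le b1 b2; have := hom_le b2 b1.
rewrite -(fineK (hom_fin b1)) -(fineK (hom_fin b2)) -!EFinD !lee_fin.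
rewrite enorm_tsubC.
by move=> ? ?; apply/andP; split; lra.
Qed.
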